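(* Let $d\ge1$, $n\ge2$ be integers, $\kappa_d$ the volume of the $d$-dimensional unit ball, $V\ge0$, $-d/2<\tau_1<\dots<\tau_n$ reals, $x_i=\tau_i+d/2$, and let $\Sigma_n$ have entries $\frac{Vd\kappa_d}{2(x_i+x_j)}$, with eigenvalues $\lambda_1\le\dots\le\lambda_n$. Put $Q=\sum_{l=1}^n\sum_{k=1}^n\frac{n}{(x_k+x_l)^2}-\Big(\sum_{i=1}^n\frac{1}{2x_i}\Big)^2$ and $$\bar S_n=\frac{Vd\kappa_d\Big(\sum_{i=1}^n\frac1{2x_i}+\sqrt{(n-1)Q}\Big)}{2n},\qquad \underline S_n=\frac{Vd\kappa_d\prod_{1\le i<j\le n}(x_i-x_j)^2}{2\prod_{1\le i,j\le n}(x_i+x_j)\Big(\frac{\sum_{i=1}^n\frac{\sqrt{n-1}}{2x_i}+\sqrt Q}{n\sqrt{n-1}}\Big)^{n-1}}.$$ Then $\underline S_n\le\lambda_1\le\dots\le\lambda_n\le\bar S_n$.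
   Context: $\Sigma_n$ is the asymptotic covariance matrix of normalized length power functionals in the subcritical regime. *)

From HB Require Import structures.
From mathcomp Require Import all_boot all_order all_algebra.
From mathcomp Require Import all_classical all_reals all_analysis.
Set Implicit Arguments. Unset Strict Implicit. Unset Printing Implicit Defensive.
Import Order.TTheory GRing.Theory Num.Theory.
Local Open Scope ring_scope.

(* Volume of the d-dimensional unit ball, via the standard recurrence
   kappa_0 = 1, kappa_1 = 2, kappa_{d+2} = 2 pi / (d+2) * kappa_d
   (equivalently pi^(d/2) / Gamma(d/2+1)). *)
Fixpoint unit_ball_vol (R : realType) (d : nat) : R :=
  match d with
  | 0 => 1
  | 1 => 2
  | d'.+2 as d2 => (2 * pi / d2%:R) * unit_ball_vol R d'
  end.

Definition xpar (R : realType) (d n : nat) (tau : 'I_n -> R) (i : 'I_n) : R :=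
  tau i + d%:R / 2.

Definition Sigma (R : realType) (d n : nat) (V : R) (tau : 'I_n -> R) : 'M[R]_n :=
  \matrix_(i, j) (V * d%:R * unit_ball_vol R d / (2 * (xpar d tau i + xpar d tau j))).

Definition Qpar (R : realType) (d n : nat) (tau : 'I_n -> R) : R :=
  (\sum_(l < n) \sum_(k < n) n%:R / (xpar d tau k + xpar d tau l) ^+ 2)
  - (\sum_(i < n) 1 / (2 * xpar d tau i)) ^+ 2.

Definition S_upper (R : realType) (d n : nat) (V : R) (tau : 'I_n -> R) : R :=
  V * d%:R * unit_ball_vol R d *
  ((\sum_(i < n) 1 / (2 * xpar d tau i)) + Num.sqrt ((n%:R - 1) * Qpar d tau))
  / (2 * n%:R).

Definition S_lower (R : realType) (d n : nat) (V : R) (tau : 'I_n -> R) : R :=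
  V * d%:R * unit_ball_vol R d *
  (\prod_(i < n) \prod_(j < n | (i < j)%N) (xpar d tau i - xpar d tau j) ^+ 2)
  / (2 * (\prod_(i < n) \prod_(j < n) (xpar d tau i + xpar d tau j)) *
     ((\sum_(i < n) Num.sqrt (n%:R - 1) / (2 * xpar d tau i) + Num.sqrt (Qpar d tau))
       / (n%:R * Num.sqrt (n%:R - 1))) ^+ n.-1).

From HB Require Import structures.
From mathcomp Require Import all_boot all_order all_algebra.
From mathcomp Require Import all_classical all_reals all_analysis.
From mathcomp Require Import complex ring lra.
Import Order.TTheory GRing.Theory Num.Theory.
Local Open Scope ring_scope.
Set Implicit Arguments. Unset Strict Implicit. Unset Printing Implicit Defensive.

(* Sigma_n = c C with c = V d kappa_d / 2 and C_ij = 1 / (x_i + x_j) a Cauchy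
   matrix with positive nodes; C is positive semidefinite and Cauchy's formula
   gives det C = prod_{i<j} (x_i - x_j)^2 / prod_{i,j} (x_i + x_j).
   Every real eigenvalue l of an n x n matrix A satisfies the Wolkowicz-Styan
   bound |n l - tr A| <= sqrt ((n - 1) (n |A|_F^2 - (tr A)^2)), which is the
   upper bound.  When A is symmetric positive semidefinite its eigenvalues are
   real and nonnegative, so AM-GM on the eigenvalues other than l gives
   det A <= l ((tr A - l) / (n - 1))^(n-1); bounding the mean (tr A - l) / (n - 1)
   by the same trace inequality and dividing yields the lower bound. *)

(** * Quadratic forms and the Wolkowicz-Styan bound *)

Section QuadraticForm.
Variable R : comNzRingType.

Definition quad_form n (A : 'M[R]_n) (u : 'rV[R]_n) : R := (u *m A *m u^T) 0 0.

Lemma quad_formE n (A : 'M[R]_n) (u : 'rV[R]_n) :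
  quad_form A u = \sum_i \sum_j u 0 i * u 0 j * A i j.
Proof.
rewrite /quad_form mxE exchange_big; apply: eq_bigr => j _ /=.
by rewrite !mxE mulr_suml; apply: eq_bigr => i _; ring.
Qed.

Lemma quad_form_eigen n (A : 'M[R]_n) (v : 'rV[R]_n) (l : R) :
  v *m A = l *: v -> quad_form A v = l * \sum_i v 0 i ^+ 2.
Proof.
move=> vA; rewrite /quad_form vA -scalemxAl !mxE; congr (_ * _).
by apply: eq_bigr => i _; rewrite mxE expr2.
Qed.

Lemma quad_form_lift0 n (A : 'M[R]_n.+1) (u : 'rV[R]_n.+1) :
  u 0 ord0 = 0 -> quad_form A u = quad_form (row' ord0 (col' ord0 A)) (col' ord0 u).
Proof.
move=> u0; rewrite !quad_formE big_ord_recl u0 big1 ?add0r => [|j _]; last by rewrite !mul0r.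
apply: eq_bigr => i _; rewrite big_ord_recl u0 mulr0 mul0r add0r.
by apply: eq_bigr => j _; rewrite !mxE.
Qed.

Lemma sum_sqr_rank_one_shift n (A : 'M[R]_n) (u : 'rV[R]_n) (a b : R) :
  \sum_i \sum_j (A i j + a * (i == j)%:R + b * (u 0 i * u 0 j)) ^+ 2 =
  \sum_i \sum_j A i j ^+ 2 + a ^+ 2 * n%:R + b ^+ 2 * (\sum_i u 0 i ^+ 2) ^+ 2
  + 2 * a * \tr A + 2 * b * quad_form A u + 2 * a * b * \sum_i u 0 i ^+ 2.
Proof.
have expand i j : (A i j + a * (i == j)%:R + b * (u 0 i * u 0 j)) ^+ 2 =
   A i j ^+ 2 + a ^+ 2 * (i == j)%:R + b ^+ 2 * (u 0 i ^+ 2 * u 0 j ^+ 2)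
   + 2 * a * ((i == j)%:R * A i j) + 2 * b * (u 0 i * u 0 j * A i j)
   + 2 * a * b * ((i == j)%:R * (u 0 i * u 0 j)).
  by case: (i == j); rewrite ?mulr1n ?mulr0n; ring.
have delta_sum (F : 'I_n -> R) i : \sum_j (i == j)%:R * F j = F i.
  rewrite (bigD1 i) //= eqxx mul1r big1 ?addr0 // => j.
  by rewrite eq_sym => /negbTE ->; rewrite mul0r.
under eq_bigr => i _ do rewrite (eq_bigr _ (fun j _ => expand i j)) !big_split /= -!mulr_sumr.
rewrite !big_split /= -!mulr_sumr quad_formE /mxtrace.
congr (_ + _ + _ + _ + _ + _).
- congr (_ * _); rewrite -[in RHS](card_ord n) -sumr_const; apply: eq_bigr => i _.
  by rewrite -[RHS](delta_sum (fun=> 1) i); apply: eq_bigr => j _; rewrite mulr1.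
- by congr (_ * _); rewrite expr2 mulr_suml; apply: eq_bigr => i _; rewrite mulr_sumr.
- by congr (_ * _); apply: eq_bigr => i _; rewrite delta_sum.
- by congr (_ * _); apply: eq_bigr => i _; rewrite (delta_sum (fun j => u 0 i * u 0 j)) expr2.
Qed.

End QuadraticForm.

Lemma rV_sqr_sum_gt0 (R : realDomainType) n (v : 'rV[R]_n) :
  v != 0 -> 0 < \sum_i v 0 i ^+ 2.
Proof.
move=> v_neq0; have [i vi_neq0] : exists i, v 0 i != 0.
  apply/existsP; apply: contraNT v_neq0; rewrite negb_exists => /forallP v0.
  by apply/eqP/rowP => i; rewrite !mxE; exact/eqP/negPn.
rewrite (bigD1 i) //= ltr_wpDr ?lt_def ?sqr_ge0 ?sqrf_eq0 ?vi_neq0 //.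
by apply: sumr_ge0 => j _; exact: sqr_ge0.
Qed.

Lemma eigenvalue_trace_dev_sqr (R : realFieldType) n (A : 'M[R]_n) (l : R) :
  (1 < n)%N -> eigenvalue A l ->
  (n%:R * l - \tr A) ^+ 2 <= (n%:R - 1) * (n%:R * \sum_i \sum_j A i j ^+ 2 - \tr A ^+ 2).
Proof.
move=> n_gt1 /eigenvalueP[v vA v_neq0].
set N := \sum_i v 0 i ^+ 2; set T := \tr A; set S := \sum_i _.
have N_gt0 : 0 < N by exact: rV_sqr_sum_gt0.
have n1_gt0 : 0 < n%:R - 1 :> R by rewrite subr_gt0 ltr1n.
have n_gt0 : 0 < n%:R :> R by rewrite ltr0n (ltn_trans _ n_gt1).
pose a := (l - T) / (n%:R - 1); pose b := - (n%:R * l - T) / ((n%:R - 1) * N).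
rewrite -subr_ge0.
(* The slack of the inequality is [n (n - 1) |A + a I + b v^T v|_F^2]. *)
have <- : n%:R * (n%:R - 1) *
    \sum_i \sum_j (A i j + a * (i == j)%:R + b * (v 0 i * v 0 j)) ^+ 2 =
    (n%:R - 1) * (n%:R * S - T ^+ 2) - (n%:R * l - T) ^+ 2.
  rewrite sum_sqr_rank_one_shift (quad_form_eigen vA) -/N -/T -/S /a /b.
  by field; rewrite !gt_eqF.
apply: mulr_ge0; first by rewrite mulr_ge0 ?ltW.
by apply: sumr_ge0 => i _; apply: sumr_ge0 => j _; exact: sqr_ge0.
Qed.

(** * Spectra of symmetric positive semidefinite matrices *)

(* [a + i b] is an eigenvector of [A] for the eigenvalue [p + i q]. *)
Lemma sym_psd_eigenpair (R : realFieldType) n (A : 'M[R]_n) (a b : 'rV[R]_n) (p q : R) :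
  A^T = A -> (forall u, 0 <= quad_form A u) ->
  a *m A = p *: a - q *: b -> b *m A = p *: b + q *: a -> (a != 0) || (b != 0) ->
  q = 0 /\ 0 <= p.
Proof.
move=> symA psdA aA bA ab_neq0.
pose dot (u v : 'rV[R]_n) := \tr (u *m v^T).
have dotC u v : dot u v = dot v u by rewrite /dot -mxtrace_tr trmx_mul trmxK.
have dotAC (u v : 'rV[R]_n) : \tr (u *m A *m v^T) = \tr (v *m A *m u^T).
  by rewrite -mxtrace_tr !trmx_mul !trmxK symA mulmxA.
have N_gt0 : 0 < dot a a + dot b b.
  have dot_sqr u : dot u u = \sum_i u 0 i ^+ 2.
    by rewrite /dot trace_mx11 mxE; apply: eq_bigr => i _; rewrite mxE expr2.
  have sqr_sum_ge0 (u : 'rV[R]_n) : 0 <= \sum_i u 0 i ^+ 2.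
    by apply: sumr_ge0 => i _; exact: sqr_ge0.
  rewrite !dot_sqr; case/orP: ab_neq0 => /rV_sqr_sum_gt0 ?.
    exact: ltr_wpDr.
  exact: ltr_wpDl.
have q0 : q = 0.
  have := dotAC a b; rewrite aA bA -scaleNr !mulmxDl -!scalemxAl.
  rewrite !mxtraceD !mxtraceZ -!/(dot _ _) (dotC b a) => /eqP.
  rewrite (inj_eq (addrI _)) mulNr eq_sym -addr_eq0 -mulrDr mulf_eq0.
  by rewrite (gt_eqF N_gt0) orbF => /eqP.
split=> //; have := addr_ge0 (psdA a) (psdA b).
rewrite /quad_form -!trace_mx11 aA bA q0 !scale0r subr0 addr0 -!scalemxAl !mxtraceZ.
by rewrite -mulrDr pmulr_lge0.
Qed.

Section ComplexEigenvalue.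
Variable R : rcfType.
Local Open Scope complex_scope.

Lemma Re_mulmx_real n (w : 'rV[R[i]]_n) (M : 'M[R]_n) :
  map_mx (@complex.Re R) (w *m map_mx (real_complex R) M) = map_mx (@complex.Re R) w *m M.
Proof.
apply/rowP => j; rewrite !mxE raddf_sum; apply: eq_bigr => i _.
by rewrite !mxE; case: (w 0 i) => x y /=; rewrite mulr0 subr0.
Qed.

Lemma Im_mulmx_real n (w : 'rV[R[i]]_n) (M : 'M[R]_n) :
  map_mx (@complex.Im R) (w *m map_mx (real_complex R) M) = map_mx (@complex.Im R) w *m M.
Proof.
apply/rowP => j; rewrite !mxE raddf_sum; apply: eq_bigr => i _.
by rewrite !mxE; case: (w 0 i) => x y /=; rewrite mulr0 add0r.
Qed.

Lemma Re_scalemx n (z : R[i]) (w : 'rV[R[i]]_n) :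
  map_mx (@complex.Re R) (z *: w) =
  complex.Re z *: map_mx (@complex.Re R) w - complex.Im z *: map_mx (@complex.Im R) w.
Proof. by apply/rowP => j; rewrite !mxE; case: z => x y; case: (w 0 j). Qed.

Lemma Im_scalemx n (z : R[i]) (w : 'rV[R[i]]_n) :
  map_mx (@complex.Im R) (z *: w) =
  complex.Re z *: map_mx (@complex.Im R) w + complex.Im z *: map_mx (@complex.Re R) w.
Proof. by apply/rowP => j; rewrite !mxE; case: z => x y; case: (w 0 j). Qed.

Lemma sym_psd_complex_eigenvalue n (A : 'M[R]_n) (z : R[i]) :
  A^T = A -> (forall u, 0 <= quad_form A u) ->
  eigenvalue (map_mx (real_complex R) A) z -> z = (complex.Re z)%:C /\ 0 <= complex.Re z.
Proof.
move=> symA psdA /eigenvalueP[u uA u_neq0].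
pose a := map_mx (@complex.Re R) u; pose b := map_mx (@complex.Im R) u.
have aA : a *m A = complex.Re z *: a - complex.Im z *: b.
  by rewrite -Re_mulmx_real uA Re_scalemx.
have bA : b *m A = complex.Re z *: b + complex.Im z *: a.
  by rewrite -Im_mulmx_real uA Im_scalemx.
have ab_neq0 : (a != 0) || (b != 0).
  apply: contraNT u_neq0; rewrite negb_or !negbK => /andP[/eqP a0 /eqP b0].
  apply/eqP/rowP => j; have /rowP/(_ j) := a0; have /rowP/(_ j) := b0.
  by rewrite !mxE; case: (u 0 j) => x y /= -> ->.
have [Imz0 Rez_ge0] := sym_psd_eigenpair symA psdA aA bA ab_neq0.
by split=> //; apply/eqP; rewrite eq_complex /= Imz0 !eqxx.
Qed.

Lemma sym_psd_char_poly n (A : 'M[R]_n) :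
  A^T = A -> (forall u, 0 <= quad_form A u) ->
  exists2 rs : seq R, char_poly A = \prod_(r <- rs) ('X - r%:P) & all (>= 0) rs.
Proof.
move=> symA psdA; pose f := real_complex R.
have [zs zsE] := closed_field_poly_normal (char_poly (map_mx f A)).
rewrite (monicP (char_poly_monic _)) scale1r in zsE.
have zs_real z : z \in zs -> z = (complex.Re z)%:C /\ 0 <= complex.Re z.
  move=> z_in; apply: (sym_psd_complex_eigenvalue symA psdA).
  by rewrite eigenvalue_root_char zsE root_prod_XsubC.
exists (map (@complex.Re R) zs).
  apply: (@map_poly_inj _ _ f); rewrite map_char_poly zsE map_prod_XsubC big_map.
  by apply: eq_big_seq => z /zs_real[zE _]; congr (_ - _%:P).
by apply/allP => _ /mapP[z /zs_real[_ ?] ->].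
Qed.

End ComplexEigenvalue.

Lemma char_poly_prod_XsubC (R : comNzRingType) n (A : 'M[R]_n) (rs : seq R) :
  char_poly A = \prod_(r <- rs) ('X - r%:P) ->
  [/\ size rs = n, \det A = \prod_(r <- rs) r & \tr A = \sum_(r <- rs) r].
Proof.
move=> chAE; have size_rs : size rs = n.
  by have := size_char_poly A; rewrite chAE size_prod_XsubC => -[].
split=> //.
  have := char_poly_det A; rewrite chAE coef0_prod_XsubC size_rs.
  by move/(can_inj (signrMK n)).
case: n A chAE size_rs => [|n] A chAE size_rs.
  by rewrite [A]flatmx0 mxtrace0; case: rs size_rs chAE => // _ _; rewrite big_nil.
have := @coefPn_prod_XsubC _ rs; rewrite size_rs -chAE char_poly_trace //.
by move=> /(_ isT) /oppr_inj.
Qed.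

Lemma prod_le_AGM_rem (R : numFieldType) (rs : seq R) (l : R) (k : nat) :
  all (>= 0) rs -> l \in rs -> size rs = k.+1 ->
  \prod_(r <- rs) r <= l * ((\sum_(r <- rs) r - l) / k%:R) ^+ k.
Proof.
move=> /allP rs_ge0 l_in size_rs; have rem_rs := perm_to_rem l_in.
rewrite (perm_big _ rem_rs) (perm_big _ rem_rs) !big_cons /= (addrC l) addrK.
apply: ler_wpM2l; first exact: rs_ge0.
set s := rem l rs; have size_s : size s = k by rewrite size_rem // size_rs.
have s_ge0 (i : 'I_k) : 0 <= s`_i.
  by apply/rs_ge0/(mem_rem (x := l))/mem_nth; rewrite size_s.
rewrite (big_nth 0) [\sum_(r <- s) r](big_nth 0) size_s !big_mkord.
by have := (leif_AGM (A := predT) (fun i _ => s_ge0 i)).1; rewrite card_ord.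
Qed.

Lemma sym_psd_eigenvalue_bounds (R : rcfType) n (A : 'M[R]_n) (l : R) :
  A^T = A -> (forall u, 0 <= quad_form A u) -> eigenvalue A l ->
  [/\ 0 <= l, l <= \tr A & \det A <= l * ((\tr A - l) / n.-1%:R) ^+ n.-1].
Proof.
move=> symA psdA Al; have [rs chAE /allP rs_ge0] := sym_psd_char_poly symA psdA.
have [size_rs -> ->] := char_poly_prod_XsubC chAE.
have l_in : l \in rs by rewrite -root_prod_XsubC -chAE -eigenvalue_root_char.
have l_ge0 := rs_ge0 l l_in.
split=> //.
  rewrite (perm_big _ (perm_to_rem l_in)) big_cons /= lerDl big_seq.
  by apply: sumr_ge0 => r /mem_rem; exact: rs_ge0.
apply: prod_le_AGM_rem => //; first exact/allP.
by rewrite size_rs prednK // -size_rs; case: rs l_in {chAE rs_ge0 size_rs}.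
Qed.

(* Wolkowicz-Styan (1980). *)
Definition trace_spread (R : rcfType) n (A : 'M[R]_n) : R :=
  Num.sqrt ((n%:R - 1) * (n%:R * \sum_i \sum_j A i j ^+ 2 - \tr A ^+ 2)).

Section TraceSpread.
Variables (R : rcfType) (n : nat) (A : 'M[R]_n) (l : R).
Hypotheses (n_gt1 : (1 < n)%N) (Al : eigenvalue A l).

Let n_gt0 : 0 < n%:R :> R. Proof. by rewrite ltr0n (ltn_trans _ n_gt1). Qed.
Let n1_gt0 : 0 < n%:R - 1 :> R. Proof. by rewrite subr_gt0 ltr1n. Qed.

Lemma eigenvalue_trace_dev_le : `|n%:R * l - \tr A| <= trace_spread A.
Proof. by rewrite -sqrtr_sqr ler_wsqrtr // eigenvalue_trace_dev_sqr. Qed.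

Lemma eigenvalue_le_trace_spread : l <= (\tr A + trace_spread A) / n%:R.
Proof.
rewrite ler_pdivlMr // mulrC -lerBlDl.
by have /ler_normlP[] := eigenvalue_trace_dev_le.
Qed.

Hypotheses (symA : A^T = A) (psdA : forall u, 0 <= quad_form A u).

Lemma sym_psd_det_le_trace_spread :
  \det A <= l * ((\tr A + trace_spread A / (n%:R - 1)) / n%:R) ^+ n.-1.
Proof.
have [l_ge0 l_le_tr detA] := sym_psd_eigenvalue_bounds symA psdA Al.
apply: (le_trans detA); apply: ler_wpM2l => //.
have -> : n.-1%:R = n%:R - 1 :> R by rewrite -subn1 natrB // ltnW.
set T := \tr A; set W := trace_spread A.
have Tl_ge0 : 0 <= (T - l) / (n%:R - 1).
  by apply: divr_ge0; [rewrite subr_ge0 | exact: ltW].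
have mean_le : (T - l) / (n%:R - 1) <= (T + W / (n%:R - 1)) / n%:R.
  have -> : (T + W / (n%:R - 1)) / n%:R =
            ((T - l) + (W - (T - n%:R * l)) / n%:R) / (n%:R - 1).
    by field; rewrite !gt_eqF.
  apply: ler_wpM2r; first by rewrite invr_ge0 ltW.
  rewrite lerDl; apply: divr_ge0; last exact: ltW.
  rewrite subr_ge0.
  by have /ler_normlP[+ _] := eigenvalue_trace_dev_le; rewrite opprB.
by apply: lerXn2r; rewrite ?nnegrE // (le_trans Tl_ge0).
Qed.

Lemma sym_psd_det_div_le :
  \det A / ((\tr A + trace_spread A / (n%:R - 1)) / n%:R) ^+ n.-1 <= l.
Proof.
have [l_ge0 l_le_tr _] := sym_psd_eigenvalue_bounds symA psdA Al.
have b_ge0 : 0 <= (\tr A + trace_spread A / (n%:R - 1)) / n%:R.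
  apply: divr_ge0 => //; apply: addr_ge0; first exact: le_trans l_le_tr.
  by rewrite divr_ge0 ?sqrtr_ge0 // ltW.
set b := (_ / n%:R) in b_ge0 *.
(* For [b = 0] the left-hand side is [0], as [x / 0 = 0]. *)
have [->|b_neq0] := eqVneq b 0.
  by rewrite expr0n eqn0Ngt ltn_predRL n_gt1 invr0 mulr0.
rewrite ler_pdivrMr ?exprn_gt0 ?lt_def ?b_neq0 //.
exact: sym_psd_det_le_trace_spread.
Qed.

End TraceSpread.

(** * Cauchy matrices *)

Section CauchyMatrix.
Variable F : fieldType.

Definition cauchy_mx n (x : 'I_n -> F) : 'M[F]_n := \matrix_(i, j) (x i + x j)^-1.

Definition discr n (x : 'I_n -> F) : F :=
  \prod_(i < n) \prod_(j < n | (i < j)%N) (x i - x j) ^+ 2.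

Definition cauchy_denom n (x : 'I_n -> F) : F := \prod_(i < n) \prod_(j < n) (x i + x j).

(* Eliminating the pivot [a] of the Cauchy kernel leaves the same kernel,
   rescaled by [(y - a) / (y + a)] in each variable. *)
Lemma cauchy_kernel_split (a y z : F) :
  a + y != 0 -> a + z != 0 -> y + z != 0 ->
  (y + z)^-1 =
  (a + a) / ((a + y) * (a + z)) + (y - a) / (y + a) * ((z - a) / (z + a)) / (y + z).
Proof.
move=> ay az yz; rewrite ![y + a]addrC ![z + a]addrC.
by field; rewrite ay az yz.
Qed.

Lemma cauchy_mx_lift0 n (x : 'I_n.+1 -> F) :
  row' ord0 (col' ord0 (cauchy_mx x)) = cauchy_mx (fun i : 'I_n => x (lift ord0 i)).
Proof. by apply/matrixP => i j; rewrite !mxE. Qed.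

Lemma det_cauchy_mx_pivot n (x : 'I_n.+1 -> F) : (forall i j, x i + x j != 0) ->
  let a := x ord0 in let x' (i : 'I_n) := x (lift ord0 i) in
  \det (cauchy_mx x) =
  (a + a)^-1 * (\prod_i ((x' i - a) / (x' i + a))) ^+ 2 * \det (cauchy_mx x').
Proof.
move=> x_neq0 a x'.
pose l i := (a + a) / (a + x i); pose e i := (x i - a) / (x i + a).
pose L := \matrix_(i, j) if j == ord0 then l i else (i == j)%:R.
pose M := \matrix_(i, j) if i == ord0 then (a + x j)^-1 else e i * e j / (x i + x j).
have aa : a + a != 0 by apply: x_neq0.
have l0 : l ord0 = 1 by rewrite /l divff.
have e0 : e ord0 = 0 by rewrite /e subrr mul0r.
have CLM : cauchy_mx x = L *m M.
  apply/matrixP => i j; rewrite !mxE big_ord_recl !mxE eqxx.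
  under eq_bigr => k _ do rewrite !mxE !lift_eqF.
  case: (unliftP ord0 i) => [i'|] ->.
  - rewrite (bigD1 i') //= eqxx mul1r big1 => [|k]; last first.
      by rewrite eq_sym => /negbTE ki; rewrite (inj_eq lift_inj) ki mul0r.
    rewrite addr0 (@cauchy_kernel_split a) ?x_neq0 //.
    by rewrite /l /e; field; rewrite !x_neq0.
  - rewrite l0 mul1r big1 ?addr0 // => k _.
    by rewrite eq_liftF mul0r.
have detL : \det L = 1.
  rewrite det_trig; last first.
    apply/forallP => i; apply/forallP => j; apply/implyP => ij; rewrite mxE.
    have [j0|_] := eqVneq j ord0; first by rewrite j0 in ij.
    by rewrite -val_eqE /= ltn_eqF.
  by rewrite big1 // => i _; rewrite mxE eqxx; case: eqP => [->|].
have minorM : row' ord0 (col' ord0 M) =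
    diag_mx (\row_i e (lift ord0 i)) *m cauchy_mx x' *m diag_mx (\row_i e (lift ord0 i)).
  apply/matrixP => i j; rewrite mul_mx_diag mul_diag_mx !mxE lift_eqF.
  by rewrite mulrAC.
rewrite CLM det_mulmx detL mul1r (expand_det_col _ ord0) big_ord_recl big1 => [|i _].
  rewrite addr0 /cofactor minorM !det_mulmx !det_diag !mxE eqxx /= expr0 mul1r.
  rewrite -/a expr2; under eq_bigr => i _ do rewrite mxE.
  by rewrite /e; ring.
by rewrite mxE lift_eqF e0 mulr0 !mul0r.
Qed.

Lemma discr_lift0 n (x : 'I_n.+1 -> F) :
  discr x = (\prod_j (x (lift ord0 j) - x ord0)) ^+ 2 * discr (fun i : 'I_n => x (lift ord0 i)).
Proof.
rewrite /discr big_ord_recl; congr (_ * _).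
  rewrite big_mkcond big_ord_recl /= mul1r -prodrXl; apply: eq_bigr => j _.
  by rewrite -sqrrN opprB.
apply: eq_bigr => i _; rewrite big_mkcond big_ord_recl /= mul1r [in RHS]big_mkcond.
by apply: eq_bigr => j _; rewrite /bump !add1n ltnS.
Qed.

Lemma cauchy_denom_lift0 n (x : 'I_n.+1 -> F) :
  cauchy_denom x = (x ord0 + x ord0) * (\prod_j (x (lift ord0 j) + x ord0)) ^+ 2 *
                   cauchy_denom (fun i : 'I_n => x (lift ord0 i)).
Proof.
rewrite {1}/cauchy_denom (eq_bigr (fun i => (x i + x ord0) * \prod_j (x i + x (lift ord0 j))));
  last by move=> i _; rewrite big_ord_recl.
rewrite big_ord_recl /= big_split /= expr2 !mulrA.
by congr (_ * _ * _ * _); apply: eq_bigr => j _; rewrite addrC.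
Qed.

Lemma cauchy_denom_neq0 n (x : 'I_n -> F) :
  (forall i j, x i + x j != 0) -> cauchy_denom x != 0.
Proof. by move=> x_neq0; apply/prodf_neq0 => i _; apply/prodf_neq0 => j _. Qed.

Lemma det_cauchy_mx n (x : 'I_n -> F) :
  (forall i j, x i + x j != 0) -> \det (cauchy_mx x) = discr x / cauchy_denom x.
Proof.
elim: n x => [|n IH] x x_neq0; first by rewrite det_mx00 /discr /cauchy_denom !big_ord0 divr1.
rewrite det_cauchy_mx_pivot // IH // discr_lift0 cauchy_denom_lift0 prodf_div.
have := cauchy_denom_neq0 (fun i j => x_neq0 (lift ord0 i) (lift ord0 j)).
have : \prod_j (x (lift ord0 j) + x ord0) != 0 by apply/prodf_neq0 => j _.
by move=> ? ?; field; rewrite x_neq0 /=; apply/and3P.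
Qed.

End CauchyMatrix.

Lemma cauchy_mx_psd (R : realFieldType) n (x : 'I_n -> R) :
  (forall i, 0 < x i) -> forall u, 0 <= quad_form (cauchy_mx x) u.
Proof.
elim: n x => [|n IH] x x_gt0 u; first by rewrite quad_formE big_ord0.
set a := x ord0.
have a_gt0 : 0 < a by exact: x_gt0.
have x_neq0 i j : x i + x j != 0 by rewrite gt_eqF ?addr_gt0.
pose w := \row_i ((x i - a) / (x i + a) * u 0 i).
have split : quad_form (cauchy_mx x) u =
    (\sum_i (a + a) / (a + x i) * u 0 i) ^+ 2 / (a + a) + quad_form (cauchy_mx x) w.
  rewrite !quad_formE expr2 mulr_suml mulr_suml -big_split; apply: eq_bigr => i _ /=.
  rewrite mulr_sumr mulr_suml -big_split; apply: eq_bigr => j _ /=.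
  rewrite !mxE (@cauchy_kernel_split _ a) ?x_neq0 //.
  by field; rewrite !x_neq0.
rewrite split; apply: addr_ge0; first by rewrite divr_ge0 ?sqr_ge0 // ltW ?addr_gt0.
rewrite quad_form_lift0; last by rewrite mxE subrr !mul0r.
by rewrite cauchy_mx_lift0; apply: IH => i; exact: x_gt0.
Qed.

(** * The covariance matrix *)

Lemma unit_ball_vol_gt0 (R : realType) d : 0 < unit_ball_vol R d.
Proof.
suff : 0 < unit_ball_vol R d /\ 0 < unit_ball_vol R d.+1 by case.
elim: d => [|d [vol_gt0 ->]] /=; first by rewrite ltr0n.
by split=> //; rewrite mulr_gt0 // divr_gt0 ?ltr0n // mulr_gt0 ?ltr0n ?pi_gt0.
Qed.

Section CovarianceMatrix.
Variables (R : realType) (d n : nat) (V : R) (tau : 'I_n -> R).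
Hypotheses (n_gt1 : (1 < n)%N) (V_ge0 : 0 <= V) (tau_gt : forall i, - (d%:R / 2) < tau i).
Local Notation x := (xpar d tau).
Local Notation c := (V * d%:R * unit_ball_vol R d / 2).
Local Notation Sigma_n := (Sigma d V tau).
Local Notation s1 := (Num.sqrt (n%:R - 1 : R)).
Local Notation H := (\sum_i 1 / (2 * x i)).
Local Notation B := ((\sum_i s1 / (2 * x i) + Num.sqrt (Qpar d tau)) / (n%:R * s1)).

Let n_gt0 : 0 < n%:R :> R. Proof. by rewrite ltr0n (ltn_trans _ n_gt1). Qed.
Let n1_gt0 : 0 < n%:R - 1 :> R. Proof. by rewrite subr_gt0 ltr1n. Qed.

Lemma xpar_gt0 i : 0 < x i.
Proof. by have := tau_gt i; rewrite /xpar; lra. Qed.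

Let c_ge0 : 0 <= c.
Proof. by rewrite divr_ge0 // !mulr_ge0 // ltW // unit_ball_vol_gt0. Qed.

Let sum_s1E : \sum_i s1 / (2 * x i) = s1 * H.
Proof. by rewrite mulr_sumr; apply: eq_bigr => i _; rewrite mulrA mulr1. Qed.

Lemma Sigma_cauchy : Sigma_n = c *: cauchy_mx x.
Proof. by apply/matrixP => i j; rewrite !mxE invfM; ring. Qed.

Lemma Sigma_sym : Sigma_n^T = Sigma_n.
Proof. by apply/matrixP => i j; rewrite !mxE addrC. Qed.

Lemma Sigma_psd u : 0 <= quad_form Sigma_n u.
Proof.
rewrite Sigma_cauchy /quad_form -scalemxAr -scalemxAl mxE mulr_ge0 //.
exact: cauchy_mx_psd xpar_gt0 u.
Qed.

Lemma mxtrace_Sigma : \tr Sigma_n = c * H.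
Proof.
rewrite Sigma_cauchy mxtraceZ; congr (_ * _); apply: eq_bigr => i _.
by rewrite mxE div1r -mulr2n mulr_natl.
Qed.

Lemma trace_spread_Sigma : trace_spread Sigma_n = c * Num.sqrt ((n%:R - 1) * Qpar d tau).
Proof.
have frobE : \sum_i \sum_j Sigma_n i j ^+ 2 = c ^+ 2 * \sum_i \sum_j 1 / (x j + x i) ^+ 2.
  rewrite mulr_sumr; apply: eq_bigr => i _; rewrite mulr_sumr; apply: eq_bigr => j _.
  by rewrite Sigma_cauchy !mxE exprMn div1r exprVn addrC.
have nfrobE : \sum_(l < n) \sum_(k < n) n%:R / (x k + x l) ^+ 2 =
              n%:R * \sum_i \sum_j 1 / (x j + x i) ^+ 2.
  rewrite mulr_sumr; apply: eq_bigr => l _; rewrite mulr_sumr; apply: eq_bigr => k _.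
  by rewrite mulrA mulr1.
rewrite /trace_spread /Qpar frobE mxtrace_Sigma nfrobE.
set G := \sum_i _; set H := \sum_i _.
have -> : (n%:R - 1) * (n%:R * (c ^+ 2 * G) - (c * H) ^+ 2) =
          c ^+ 2 * ((n%:R - 1) * (n%:R * G - H ^+ 2)) by ring.
by rewrite sqrtrM ?sqr_ge0 // sqrtr_sqr ger0_norm.
Qed.

Lemma S_upperE : S_upper d V tau = (\tr Sigma_n + trace_spread Sigma_n) / n%:R.
Proof. by rewrite mxtrace_Sigma trace_spread_Sigma /S_upper; field; rewrite gt_eqF. Qed.

Lemma Sigma_mean_bound :
  (\tr Sigma_n + trace_spread Sigma_n / (n%:R - 1)) / n%:R = c * B.
Proof.
rewrite sum_s1E mxtrace_Sigma trace_spread_Sigma sqrtrM ?ltW //.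
have := sqr_sqrtr (ltW n1_gt0); set s := Num.sqrt _ => <-.
by field; rewrite !gt_eqF ?sqrtr_gt0.
Qed.

Lemma Sigma_mean_base_gt0 : 0 < B.
Proof.
have H_gt0 : 0 < H.
  have term_gt0 i : 0 < 1 / (2 * x i) by rewrite divr_gt0 ?mulr_gt0 ?xpar_gt0.
  rewrite (bigD1 (Ordinal (ltnW n_gt1))) //= ltr_pwDl //.
  by apply: sumr_ge0 => i _; exact: ltW.
have s1_gt0 : 0 < s1 by rewrite sqrtr_gt0.
by rewrite sum_s1E divr_gt0 ?mulr_gt0 // ltr_pwDl ?mulr_gt0 ?sqrtr_ge0.
Qed.

Lemma S_lowerE : S_lower d V tau =
  \det Sigma_n / ((\tr Sigma_n + trace_spread Sigma_n / (n%:R - 1)) / n%:R) ^+ n.-1.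
Proof.
have x_neq0 i j : x i + x j != 0 by rewrite gt_eqF // addr_gt0 ?xpar_gt0.
rewrite Sigma_mean_bound Sigma_cauchy detZ det_cauchy_mx // /S_lower.
have := lt0r_neq0 Sigma_mean_base_gt0; set b := B => b_neq0.
set k := V * d%:R * unit_ball_vol R d / 2.
have -> : V * d%:R * unit_ball_vol R d = 2 * k by rewrite /k; field.
(* For [k = 0] both sides are [0], the right-hand one because [x / 0 = 0]. *)
have [->|k_neq0] := eqVneq k 0.
  by rewrite expr0n gtn_eqF ?(ltn_trans _ n_gt1) // !(mulr0, mul0r).
have knE : k ^+ n = k * k ^+ n.-1 by rewrite -exprS prednK // ltnW.
have kk_neq0 : k ^+ n.-1 != 0 by exact: expf_neq0.
have bk_neq0 : b ^+ n.-1 != 0 by exact: expf_neq0.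
have := cauchy_denom_neq0 x_neq0; rewrite knE (exprMn _ k) /discr /cauchy_denom.
move: kk_neq0 bk_neq0; set kk := k ^+ _; set bk := b ^+ _; set D := \prod_i _.
by move=> ? ? ?; field; apply/and3P.
Qed.

End CovarianceMatrix.

Unset Implicit Arguments.

Theorem theorem6p7 (R : realType) (d n : nat) (V : R) (tau : 'I_n -> R) :
  (1 <= d)%N -> (2 <= n)%N -> 0 <= V ->
  (forall i : 'I_n, - (d%:R / 2) < tau i) ->
  (forall i j : 'I_n, (i < j)%N -> tau i < tau j) ->
  forall lambda : R, eigenvalue (Sigma d V tau) lambda ->
    S_lower d V tau <= lambda /\ lambda <= S_upper d V tau.
Proof.
move=> _ n_gt1 V_ge0 tau_gt _ lambda Sl.
rewrite S_lowerE // S_upperE //; split.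
  by apply: (sym_psd_det_div_le n_gt1 Sl); [exact: Sigma_sym | exact: Sigma_psd].
exact: eigenvalue_le_trace_spread.
Qed.
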